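(* For every graph $G$, $\operatorname{box}(G)\le MFVC(G)+3$.
   Context: A feedback vertex cover of $G=(V,E)$ is a set $S\subseteq V$ such that the subgraph induced on $V\setminus S$ is a forest; $MFVC(G)$ is the minimum cardinality of a feedback vertex cover. The boxicity $\operatorname{box}(G)$ is the minimum $b$ such that $G$ is the intersection graph of axis-parallel boxes in $\mathbb{R}^b$ (products of $b$ closed intervals), one box per vertex. *)

From Stdlib Require Import Reals ClassicalEpsilon.
From mathcomp Require Import all_boot.

Set Implicit Arguments.
Unset Strict Implicit.
Unset Printing Implicit Defensive.

(* A (finite, simple) graph: vertex type T : finType, adjacency e : rel T,
   assumed symmetric and irreflexive in the theorem. *)

Definition has_cycle_in (T : finType) (e : rel T) (A : {set T}) : Prop :=
  exists p : seq T, [/\ (3 <= size p)%N, uniq p, all (fun x => x \in A) p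
                     & cycle e p].

Definition induced_forest (T : finType) (e : rel T) (A : {set T}) : Prop :=
  ~ has_cycle_in e A.

Definition is_fvc (T : finType) (e : rel T) (S : {set T}) : Prop :=
  induced_forest e (~: S).

Definition asb (P : Prop) : bool :=
  if excluded_middle_informative P then true else false.

(* MFVC(G): minimum cardinality of a feedback vertex cover
   (the full vertex set is always one, so #|T| is a valid default). *)
Definition mfvc (T : finType) (e : rel T) : nat :=
  \big[minn/#|T|]_(S : {set T} | asb (is_fvc e S)) #|S|.

Definition in_box (b : nat) (lo hi : 'I_b -> R) (x : 'I_b -> R) : Prop :=
  forall i, Rle (lo i) (x i) /\ Rle (x i) (hi i).

Definition box_rep (T : finType) (e : rel T) (b : nat) : Prop :=
  exists lo hi : T -> 'I_b -> R,
    (forall v i, Rle (lo v i) (hi v i)) /\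
    (forall u v, u != v ->
       (e u v <-> exists x : 'I_b -> R, in_box (lo u) (hi u) x /\ in_box (lo v) (hi v) x)).

Definition boxicity_le (T : finType) (e : rel T) (k : nat) : Prop :=
  exists b : nat, (b <= k)%N /\ box_rep e b.

From Stdlib Require Import Reals Lra Classical ClassicalEpsilon.
From mathcomp Require Import all_boot.

Set Implicit Arguments.
Unset Strict Implicit.
Unset Printing Implicit Defensive.

(* Let S be a minimum feedback vertex cover.  The forest G - S is an
   intersection graph of rectangles, built leaf by leaf: the x-intervals of
   the children of a vertex are nested in a free slot at the right end of its
   own interval, and the y-interval of a vertex at depth k is [k, k + 1].
   In these two dimensions the vertices of S get the whole bounding
   rectangle, so the pairs they separate are exactly the non-edges of
   G - S.  The remaining
   non-edges, those at some s in S, are killed by one extra dimension per s,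
   in which s is the point 0, its neighbours get [0, 1] and everything else
   gets [1, 2].  Hence box(G) <= |S| + 2. *)

Section Forests.

Variables (T : finType) (e : rel T).
Hypotheses (e_sym : symmetric e) (e_irr : irreflexive e).

Lemma induced_forest_subset (A B : {set T}) :
  A \subset B -> induced_forest e B -> induced_forest e A.
Proof.
move=> sAB forestB [p [size_p uniq_p /allP pA cycle_p]]; apply: forestB.
by exists p; split=> //; apply/allP=> x /pA /(subsetP sAB).
Qed.

Lemma chord_cycle (A : {set T}) (x y : T) (p1 p2 : seq T) :
  p1 != [::] -> uniq (x :: p1 ++ y :: p2) -> {subset x :: p1 ++ y :: p2 <= A} ->
  path e x (p1 ++ y :: p2) -> e x y -> has_cycle_in e A.
Proof.
have -> : x :: p1 ++ y :: p2 = (x :: rcons p1 y) ++ p2 by rewrite /= cat_rcons.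
move=> p1_nil; rewrite cat_uniq => /andP[uniq_c _] sA.
rewrite -cat_rcons cat_path => /andP[path_c _] xy.
exists (x :: rcons p1 y); split=> //.
- by case: p1 p1_nil {uniq_c sA path_c} => //= ? ?; rewrite size_rcons.
- by apply/allP=> z zc; apply: sA; rewrite mem_cat zc.
- by rewrite /= rcons_path path_c last_rcons e_sym.
Qed.

Lemma path_extension (A : {set T}) (x : T) (p : seq T) (y1 y2 : T) :
  induced_forest e A -> uniq (x :: p) -> {subset x :: p <= A} -> path e x p ->
  y1 \in A -> y2 \in A -> e x y1 -> e x y2 -> y1 != y2 ->
  exists2 y, y \in A & (y \notin x :: p) && e y x.
Proof.
move=> forestA uniq_xp sA path_xp y1A y2A xy1 xy2 y12.
have [y1_in|y1_out] := boolP (y1 \in x :: p); last by exists y1; rewrite // y1_out e_sym.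
have [y2_in|y2_out] := boolP (y2 \in x :: p); last by exists y2; rewrite // y2_out e_sym.
have in_p z : e x z -> z \in x :: p -> z \in p.
  by move=> xz; rewrite inE => /predU1P[zx|//]; move: xz; rewrite zx e_irr.
have [y [yp xy y_head]] : exists y, [/\ y \in p, e x y & y != head x p].
  have [y1_head|y1_head] := eqVneq y1 (head x p).
    by exists y2; rewrite -y1_head eq_sym in_p.
  by exists y1; rewrite in_p.
exfalso; apply: forestA.
case/splitPr: yp uniq_xp sA path_xp y_head => p1 p2 uniq_xp sA path_xp y_head.
apply: (chord_cycle _ uniq_xp sA path_xp xy).
by case: p1 {uniq_xp sA path_xp} y_head => //=; rewrite eqxx.
Qed.

Definition at_most_one_neighbour_in (A : {set T}) (v : T) : Prop :=
  forall x y, x \in A -> y \in A -> e v x -> e v y -> x = y.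

Lemma induced_forest_leaf (A : {set T}) (x0 : T) :
  x0 \in A -> induced_forest e A -> exists2 v, v \in A & at_most_one_neighbour_in A v.
Proof.
move=> x0A forestA; apply: NNPP => no_leaf.
have branching v : v \in A ->
    exists y1 y2, [/\ y1 \in A, y2 \in A, e v y1, e v y2 & y1 != y2].
  move=> vA; apply: NNPP => no_branch; apply: no_leaf; exists v => // y1 y2 y1A y2A vy1 vy2.
  by apply/eqP/negPn/negP => y12; apply: no_branch; exists y1, y2.
have long_path k :
    exists x p, [/\ size p = k, uniq (x :: p), {subset x :: p <= A} & path e x p].
  elim: k => [|k [x [p [size_p uniq_xp sA path_xp]]]].
    by exists x0, [::]; split=> // z; rewrite inE => /eqP->.
  have [y1 [y2 [y1A y2A xy1 xy2 y12]]] := branching x (sA x (mem_head x p)).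
  have [y yA /andP[y_out yx]] := path_extension forestA uniq_xp sA path_xp y1A y2A xy1 xy2 y12.
  exists y, (x :: p); split=> /=; rewrite ?size_p ?y_out ?yx //.
  by move=> z; rewrite inE => /predU1P[->|/sA].
have [x [p [size_p uniq_xp _ _]]] := long_path #|T|.
by have := max_card (mem (x :: p)); rewrite (card_uniqP uniq_xp) /= size_p ltnn.
Qed.

End Forests.

Lemma exists_fvc_le_mfvc (T : finType) (e : rel T) :
  exists2 S, is_fvc e S & (#|S| <= mfvc e)%N.
Proof.
rewrite /mfvc; apply: (big_ind (fun m => exists2 S, is_fvc e S & (#|S| <= m)%N)).
- exists setT; last by rewrite cardsT.
  by move=> [[|x p] [//= _ _ /andP[]]]; rewrite !inE.
- move=> m1 m2 [S1 fvc1 le1] [S2 fvc2 le2].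
  by case: (leqP m1 m2) => _; [exists S1 | exists S2].
- by move=> S; rewrite /asb; case: excluded_middle_informative => // fvcS _; exists S.
Qed.

Lemma forall_split (m n : nat) (P : 'I_(m + n) -> Prop) :
  (forall i, P i) <-> (forall j, P (lshift n j)) /\ (forall k, P (rshift m k)).
Proof.
split=> [Pi|[Pl Pr] i]; first by split=> ?; apply: Pi.
by rewrite -(splitK i); case: (split i).
Qed.

Lemma forall_ord2 (P : 'I_2 -> Prop) : (forall i, P i) <-> P ord0 /\ P ord_max.
Proof.
split=> [Pi|[P0 P1] [[|[|//]] lt_i2]]; first by split.
- by rewrite (_ : Ordinal _ = ord0) //; apply: val_inj.
- by rewrite (_ : Ordinal _ = ord_max) //; apply: val_inj.
Qed.

Section Boxes.

Variable T : finType.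

Local Open Scope R_scope.

Definition meets (x1 y1 x2 y2 : R) : Prop := x1 <= y2 /\ x2 <= y1.

Lemma in_boxes_meetP (n : nat) (lo1 hi1 lo2 hi2 : 'I_n -> R) :
  (forall i, lo1 i <= hi1 i) -> (forall i, lo2 i <= hi2 i) ->
  (exists x, in_box lo1 hi1 x /\ in_box lo2 hi2 x) <->
  (forall i, meets (lo1 i) (hi1 i) (lo2 i) (hi2 i)).
Proof.
move=> lohi1 lohi2; split=> [[x [in1 in2]] i|meet].
  by have := in1 i; have := in2 i; split; lra.
exists (fun i => Rmax (lo1 i) (lo2 i)); split=> i;
  have := meet i; have := lohi1 i; have := lohi2 i; rewrite /meets /Rmax;
  case: Rle_dec; lra.
Qed.

Definition boxes_represent (adj : T -> T -> Prop) (n : nat) (lo hi : T -> 'I_n -> R) :=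
  (forall v i, lo v i <= hi v i) /\
  (forall u v, u != v -> adj u v <-> forall i, meets (lo u i) (hi u i) (lo v i) (hi v i)).

Lemma box_rep_of_boxes (e : rel T) (adj : T -> T -> Prop) n (lo hi : T -> 'I_n -> R) :
  boxes_represent adj lo hi -> (forall u v, u != v -> e u v <-> adj u v) -> box_rep e n.
Proof.
move=> [lohi adj_meet] e_adj; exists lo, hi; split=> // u v uv.
by rewrite e_adj // adj_meet // in_boxes_meetP.
Qed.

Definition box_concat m n (f : T -> 'I_m -> R) (g : T -> 'I_n -> R) v i : R :=
  match split i with inl j => f v j | inr k => g v k end.

Lemma box_concat_lshift m n (f : T -> 'I_m -> R) (g : T -> 'I_n -> R) v j :
  box_concat f g v (lshift n j) = f v j.
Proof. by rewrite /box_concat (unsplitK (inl _ j) : split (lshift n j) = _). Qed.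

Lemma box_concat_rshift m n (f : T -> 'I_m -> R) (g : T -> 'I_n -> R) v k :
  box_concat f g v (rshift m k) = g v k.
Proof. by rewrite /box_concat (unsplitK (inr _ k) : split (rshift m k) = _). Qed.

Lemma boxes_represent_concat (adj1 adj2 : T -> T -> Prop) m n
    (lo1 hi1 : T -> 'I_m -> R) (lo2 hi2 : T -> 'I_n -> R) :
  boxes_represent adj1 lo1 hi1 -> boxes_represent adj2 lo2 hi2 ->
  boxes_represent (fun u v => adj1 u v /\ adj2 u v)
    (box_concat lo1 lo2) (box_concat hi1 hi2).
Proof.
move=> [lohi1 rep1] [lohi2 rep2]; split=> [v i|u v uv].
  by rewrite /box_concat; case: (split i).
rewrite rep1 // rep2 // forall_split.
split=> -[meet1 meet2]; split=> i.
- by rewrite !box_concat_lshift; apply: meet1.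
- by rewrite !box_concat_rshift; apply: meet2.
- by have := meet1 i; rewrite !box_concat_lshift.
- by have := meet2 i; rewrite !box_concat_rshift.
Qed.

End Boxes.

Section ForestLayout.

Variables (T : finType) (e : rel T).
Hypothesis e_sym : symmetric e.

Local Open Scope R_scope.

(* Vertex u is drawn as the rectangle [a u, b u] x [d u, d u + 1], d u being
   its depth in its tree.  The right end [c u, b u] of its x-interval is a
   free slot reserved for later children of u.  Every other vertex meeting
   that slot is strictly shallower than u, so a child put into it touches no
   vertex of depth >= d u except u. *)
Record forest_layout (A : {set T}) (a c b d : T -> R) (M : R) : Prop := ForestLayout {
  layout_bound_ge0 : 0 <= M;
  layout_interval : forall u, u \in A -> [/\ 0 <= a u, a u <= c u, c u < b u & b u < M];
  layout_depth : forall u, u \in A -> 0 <= d u /\ d u + 1 <= M;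
  layout_slots_disjoint : forall u w, u \in A -> w \in A -> u != w ->
    ~ meets (c u) (b u) (c w) (b w);
  layout_slot_shallower : forall u w, u \in A -> w \in A -> u != w ->
    meets (a w) (b w) (c u) (b u) -> d w < d u;
  layout_adj : forall u w, u \in A -> w \in A -> u != w ->
    e u w <-> meets (a u) (b u) (a w) (b w) /\ meets (d u) (d u + 1) (d w) (d w + 1)
}.

Lemma forest_layout0 (f : T -> R) : forest_layout set0 f f f f 0.
Proof. by split; try lra; move=> u; rewrite inE. Qed.

Lemma forest_layout_shrink_slots A a c c' b d M :
  forest_layout A a c b d M -> (forall u, u \in A -> c u <= c' u < b u) ->
  forest_layout A a c' b d M.
Proof.
move=> [M_ge0 ab_bnd d_bnd slots_dis slot_sh adj] c'_bnd; split=> //.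
- by move=> u uA; have [? ? ? ?] := ab_bnd u uA; have := c'_bnd u uA; split; lra.
- move=> u w uA wA uw [? ?]; apply: (slots_dis u w uA wA uw).
  by have := c'_bnd u uA; have := c'_bnd w wA; split; lra.
- move=> u w uA wA uw [? ?]; apply: (slot_sh u w uA wA uw).
  by have := c'_bnd u uA; split; lra.
Qed.

Lemma forest_layout_add A a c b d M v x y h M' :
  forest_layout A a c b d M -> v \notin A ->
  0 <= x < y -> y < M' -> M <= M' -> 0 <= h -> h + 1 <= M' ->
  (forall u, u \in A -> ~ meets (c u) (b u) x y) ->
  (forall w, w \in A -> meets (a w) (b w) x y -> d w < h) ->
  (forall w, w \in A -> e v w <-> meets x y (a w) (b w) /\ meets h (h + 1) (d w) (d w + 1)) ->
  forest_layout (v |: A) [eta a with v |-> x] [eta c with v |-> x]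
    [eta b with v |-> y] [eta d with v |-> h] M'.
Proof.
move=> [_ ab_bnd d_bnd slots_dis slot_sh adj] vA xy yM' MM' h_ge0 hM' v_slot v_sh v_adj.
have ne_v w : w \in A -> w != v by apply: contraTneq => ->.
split=> [|u|u|u w|u w|u w]; rewrite ?in_setU1 /=; try lra.
- case/predU1P=> [->|/[dup] uA /ne_v /negbTE->]; rewrite ?eqxx; first by split; lra.
  by have [] := ab_bnd u uA; split; lra.
- case/predU1P=> [->|/[dup] uA /ne_v /negbTE->]; rewrite ?eqxx; first by split; lra.
  by have [] := d_bnd u uA; split; lra.
- case/predU1P=> [->|/[dup] uA /ne_v /negbTE->]; case/predU1P=> [->|/[dup] wA /ne_v /negbTE->];
    rewrite ?eqxx // => uw.
  + by move=> [? ?]; apply: (v_slot w wA); split; lra.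
  + by move=> [? ?]; apply: (v_slot u uA); split; lra.
  + exact: slots_dis.
- case/predU1P=> [->|/[dup] uA /ne_v /negbTE->]; case/predU1P=> [->|/[dup] wA /ne_v /negbTE->];
    rewrite ?eqxx // => uw.
  + exact: v_sh.
  + by move=> [? ?]; exfalso; apply: (v_slot u uA); split; lra.
  + exact: slot_sh.
- case/predU1P=> [->|/[dup] uA /ne_v /negbTE->]; case/predU1P=> [->|/[dup] wA /ne_v /negbTE->];
    rewrite ?eqxx // => uw.
  + exact: v_adj.
  + by rewrite e_sym v_adj //; split=> -[[? ?] [? ?]]; split; split; lra.
  + exact: adj.
Qed.

Lemma forest_layout_add_root A a c b d M v :
  forest_layout A a c b d M -> v \notin A -> (forall w, w \in A -> ~~ e v w) ->
  exists a' c' b' d' M', forest_layout (v |: A) a' c' b' d' M'.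
Proof.
move=> L vA v_isolated; have M_ge0 := layout_bound_ge0 L.
exists [eta a with v |-> M + 1], [eta c with v |-> M + 1], [eta b with v |-> M + 2],
  [eta d with v |-> 0], (M + 3).
apply: (forest_layout_add L vA); try lra.
- by move=> u uA [? ?]; have [] := layout_interval L uA; lra.
- by move=> w wA [? ?]; have [] := layout_interval L wA; lra.
- move=> w wA; rewrite (negbTE (v_isolated w wA)); split=> // -[[? ?] _].
  by have [] := layout_interval L wA; lra.
Qed.

Lemma forest_layout_add_leaf A a c b d M v p :
  forest_layout A a c b d M -> v \notin A -> p \in A -> e v p ->
  (forall w, w \in A -> e v w -> w = p) ->
  exists a' c' b' d' M', forest_layout (v |: A) a' c' b' d' M'.
Proof.
move=> L vA pA vp v_only; have [? ? ? ?] := layout_interval L pA.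
have [? ?] := layout_depth L pA.
pose q := (b p - c p) / 3; have q_def : 3 * q = b p - c p by rewrite /q; field.
pose c' := [eta c with p |-> c p + 2 * q].
have L' : forest_layout A a c' b d M.
  apply: (forest_layout_shrink_slots L) => u uA; rewrite /c' /=.
  by case: eqP => [->|_]; [|have [] := layout_interval L uA]; lra.
have shallower w : w \in A -> w != p -> meets (a w) (b w) (c p) (c p + q) -> d w < d p.
  move=> wA wp [? ?]; apply: (layout_slot_shallower L pA wA); first by rewrite eq_sym.
  by split; lra.
exists [eta a with v |-> c p], [eta c' with v |-> c p], [eta b with v |-> c p + q],
  [eta d with v |-> d p + 1], (M + 1).
apply: (forest_layout_add L' vA); try lra.
- move=> u uA; rewrite /c' /=; case: eqP => [->|/eqP up] [? ?]; first lra.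
  by apply: (layout_slots_disjoint L uA pA up); split; lra.
- move=> w wA meet_w; have [->|wp] := eqVneq w p; first lra.
  by have := shallower w wA wp meet_w; lra.
- move=> w wA; split=> [/(v_only w wA)->|[[? ?] [? ?]]]; first by split; split; lra.
  have [->//|wp] := eqVneq w p.
  by have := shallower w wA wp; rewrite /meets; lra.
Qed.

Lemma induced_forest_layout (e_irr : irreflexive e) (A : {set T}) :
  induced_forest e A -> exists a c b d M, forest_layout A a c b d M.
Proof.
move cardA : #|A| => n; elim: n A cardA => [|n IHn] A cardA forestA.
  have -> : A = set0 by apply/eqP; rewrite -cards_eq0 cardA.
  by do 4 exists (fun=> 0); exists 0; apply: forest_layout0.
have [x0 x0A] : exists x, x \in A by apply/set0Pn; rewrite -card_gt0 cardA.
have [v vA v_leaf] := induced_forest_leaf e_sym e_irr x0A forestA.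
have sub_A : A :\ v \subset A by apply: subD1set.
have [a [c [b [d [M L]]]]] : exists a c b d M, forest_layout (A :\ v) a c b d M.
  apply: IHn; last exact: induced_forest_subset sub_A forestA.
  by move: cardA; rewrite (cardsD1 v A) vA add1n => -[].
have v_out : v \notin A :\ v by rewrite setD11.
rewrite -(setD1K vA).
have [/exists_inP[p pA vp]|/exists_inPn v_isolated] := boolP [exists p in A :\ v, e v p].
  apply: (forest_layout_add_leaf L v_out pA vp) => w wA vw.
  by apply: v_leaf; rewrite ?(subsetP sub_A).
exact: forest_layout_add_root L v_out v_isolated.
Qed.

Lemma forest_cone_boxes (e_irr : irreflexive e) (A : {set T}) :
  induced_forest e A ->
  exists lo hi : T -> 'I_2 -> R,
    boxes_represent (fun u v => u \in A -> v \in A -> e u v) lo hi.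
Proof.
move=> /(induced_forest_layout e_irr) [a [c [b [d [M L]]]]].
have M_ge0 := layout_bound_ge0 L.
have in_bounds v : v \in A -> [/\ 0 <= a v, a v <= b v, b v <= M & 0 <= d v /\ d v + 1 <= M].
  by move=> vA; have [? ? ? ?] := layout_interval L vA; have := layout_depth L vA; split; lra.
exists (fun v i => if v \in A then if i == ord0 then a v else d v else 0).
exists (fun v i => if v \in A then if i == ord0 then b v else d v + 1 else M).
split=> [v i|u v uv]; rewrite ?forall_ord2 /=.
  by case: ifP => [/in_bounds[? ? ? ?]|_]; [case: ifP|]; lra.
case: ifP => [uA|_]; case: ifP => [vA|_].
- by have adj := layout_adj L uA vA uv; split=> [/(_ isT isT)/adj|/adj].
- have [? ? ? ?] := in_bounds u uA; rewrite /meets; split=> // _; lra.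
- have [? ? ? ?] := in_bounds v vA; rewrite /meets; split=> // _; lra.
- by rewrite /meets; split=> // _; lra.
Qed.

Definition star_lo (s v : T) : R := if (v == s) || e v s then 0 else 1.
Definition star_hi (s v : T) : R := if v == s then 0 else if e v s then 1 else 2.

Lemma star_meets (s u v : T) : u != v ->
  meets (star_lo s u) (star_hi s u) (star_lo s v) (star_hi s v) <->
  ((u == s) || (v == s) -> e u v).
Proof.
rewrite /meets /star_lo /star_hi => uv.
case: (eqVneq u s) uv => [->|us]; case: (eqVneq v s) => [->|vs] //= _.
- by rewrite [e s v]e_sym; case: (e v s); split=> [[? ?]|/(_ isT) ?] //; lra.
- by case: (e u s); split=> [[? ?]|/(_ isT) ?] //; lra.
- by case: (e u s); case: (e v s); split=> // _; lra.
Qed.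

Lemma star_boxes (S : {set T}) :
  exists lo hi : T -> 'I_#|S| -> R,
    boxes_represent (fun u v => (u \in S) || (v \in S) -> e u v) lo hi.
Proof.
exists (fun v j => star_lo (enum_val j) v), (fun v j => star_hi (enum_val j) v).
split=> [v j|u v uv].
  by rewrite /star_lo /star_hi; case: eqP => _ /=; [|case: (e _ _)]; lra.
split=> [adj_uv j|meet_uv].
  by apply/star_meets=> // /orP[]/eqP s_eq; apply: adj_uv; rewrite s_eq enum_valP ?orbT.
case/orP=> [uS|vS].
  by have /star_meets := meet_uv (enum_rank_in uS u); rewrite enum_rankK_in // eqxx; apply.
by have /star_meets := meet_uv (enum_rank_in vS v); rewrite enum_rankK_in // eqxx orbT; apply.
Qed.

End ForestLayout.

Theorem theorem18 (T : finType) (e : rel T) (e_sym : symmetric e) (e_irr : irreflexive e) :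
  boxicity_le e (mfvc e + 3).
Proof.
have [S fvcS cardS] := exists_fvc_le_mfvc e.
have [lo1 [hi1 cone]] := forest_cone_boxes e_sym e_irr fvcS.
have [lo2 [hi2 stars]] := star_boxes e_sym S.
exists (2 + #|S|)%N; split; first by rewrite addnC; apply: leq_add.
apply: box_rep_of_boxes (boxes_represent_concat cone stars) _ => u v uv.
split=> [euv|[cone_uv stars_uv]]; first by split=> // _.
have [/stars_uv //|/norP[uS vS]] := boolP ((u \in S) || (v \in S)).
by apply: cone_uv; rewrite inE.
Qed.
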